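(* Assume $q<\ell$. For every $Z\in S^{\ell}_{q,p}$, the set $$\mathcal{C}_Z:=\bigcup_{E\in\Lambda^{\ell}_Z}T^{1,0}_Z\,Gr(q,E)$$ is not contained in any proper complex linear subspace of $T^{1,0}_ZS^{\ell}_{q,p}$.
   Context: Let $q<p$ and $q\le\ell\le(p+q)/2$ be positive integers, $m=p+q-\ell$. $Gr(q,p)$ is the Grassmannian of $q$-planes in $\mathbb{C}^{p+q}$; $\langle u,v\rangle_{\ell,m}=-\sum_{i=1}^{\ell}u_i\bar v_i+\sum_{i=\ell+1}^{p+q}u_i\bar v_i$; $S^{\ell}_{q,p}=\{Z\in Gr(q,p):\langle\cdot,\cdot\rangle_{\ell,m}|_Z=0\}$ with the CR structure induced from $Gr(q,p)$. $N(\ell,m)$ is the set of subspaces $F\subset\mathbb{C}^{p+q}$ with $\langle\cdot,\cdot\rangle_{\ell,m}|_F=0$, and for $F\in N(\ell,m)$ and $n\ge\dim F$, $\Lambda^n_F=\{E\in N(\ell,m):\dim E=n,\ F\subset E\}$. For $E\in\Lambda^\ell_Z$, $Gr(q,E)$ (the $q$-planes contained in $E$) is a complex submanifold of $Gr(q,p)$ contained in $S^{\ell}_{q,p}$ and passing through $Z$. *)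

From HB Require Import structures.
From mathcomp Require Import all_boot all_order all_algebra.
Set Implicit Arguments. Unset Strict Implicit. Unset Printing Implicit Defensive.
Import Order.TTheory GRing.Theory Num.Theory.
Local Open Scope ring_scope.

Definition hform (C : numClosedFieldType) (n l : nat) (u v : 'rV[C]_n) : C :=
  \sum_(i < n) (if (i < l)%N then -1 else 1) * u 0 i * (v 0 i)^*.

Definition isotropic (C : numClosedFieldType) (n l k : nat) (A : 'M[C]_(k, n)) : Prop :=
  forall u v : 'rV[C]_n, (u <= A)%MS -> (v <= A)%MS -> hform l u v = 0.

(* Tangent space of Gr(q,n) at the q-plane Z (rows of Z : 'M_(q,n), a basis)
   is Hom(Z, C^n/Z); a tangent vector is represented by X : 'M_(q,n)
   (row i of X = image of basis vector row i Z), modulo matrices X with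
   (X <= Z)%MS.  Its complex structure J is multiplication by 'i.

   Real tangent space of S = {Z : <.,.>|_Z = 0} at Z: derivative of
   <z_i + t X_i, z_j + t X_j> at t = 0 vanishes. *)
Definition S_tangent (C : numClosedFieldType) (n l q : nat)
    (Z X : 'M[C]_(q, n)) : Prop :=
  forall i j : 'I_q, hform l (row i X) (row j Z) + hform l (row i Z) (row j X) = 0.

(* Complex (CR) tangent space H_Z S = T_Z S /\ J T_Z S, which as a complex
   vector space (with J) is T^{1,0}_Z S. *)
Definition S_CRtangent (C : numClosedFieldType) (n l q : nat)
    (Z X : 'M[C]_(q, n)) : Prop :=
  S_tangent l Z X /\ S_tangent l Z ('i *: X).

(* Tangent vectors at Z of Gr(q,E) for a subspace E containing Z:
   Hom(Z, E/Z), i.e. representatives X with rows in E. *)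
Definition Gr_tangent (C : numClosedFieldType) (n q k : nat)
    (E : 'M[C]_(k, n)) (X : 'M[C]_(q, n)) : Prop := (X <= E)%MS.

(* Every tangent vector X of T^{1,0}_Z S is a sum of vectors of the cones
   T_Z Gr(q,E): its rows are orthogonal to Z, and every vector v orthogonal
   to Z is a sum of two isotropic vectors orthogonal to Z (add and subtract a
   suitable multiple of a vector of the opposite sign, orthogonal to v and Z,
   which exists because q < l <= m). An isotropic v orthogonal to Z spans
   with Z an isotropic space, which Witt-type extension enlarges to an
   isotropic E of dimension l; then the row-v part of X lies in T_Z Gr(q,E). *)
From HB Require Import structures.
From mathcomp Require Import all_boot all_order all_algebra.
From mathcomp Require Import ring zify.
Import Order.TTheory GRing.Theory Num.Theory.
Set Implicit Arguments. Unset Strict Implicit. Unset Printing Implicit Defensive.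
Local Open Scope ring_scope.

Lemma exists_kernel_vector_submx (F : fieldType) m n k
    (P : 'M[F]_(m, n)) (M : 'M[F]_(n, k)) :
  (k < \rank P)%N -> exists x : 'rV[F]_n, [/\ x != 0, (x <= P)%MS & x *m M = 0].
Proof.
move=> ltkP; have rK : (0 < \rank (P :&: kermx M))%N.
  have := mxrank_sum_cap P (kermx M); rewrite mxrank_ker.
  have := rank_leq_col (P + kermx M)%MS; have := rank_leq_col M.
  have := rank_leq_row M; lia.
set K := (P :&: kermx M)%MS in rK *; exists (nz_row K); split.
- by rewrite nz_row_eq0 -mxrank_eq0 -lt0n.
- exact: submx_trans (nz_row_sub K) (capmxSl _ _).
- by apply/sub_kermxP; apply: submx_trans (nz_row_sub K) (capmxSr _ _).
Qed.

Lemma sum_mx_delta_row (R : pzRingType) m n (X : 'M[R]_(m, n)) :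
  X = \sum_i delta_mx i 0 *m row i X.
Proof.
rewrite -{1}[X]mul1mx mx1_sum_delta mulmx_suml.
by apply: eq_bigr => i _; rewrite rowE mulmxA mul_delta_mx.
Qed.

Lemma mxrank_col_mx_notsub (F : fieldType) k n (A : 'M[F]_(k, n)) (w : 'rV[F]_n) :
  ~~ (w <= A)%MS -> \rank (col_mx A w) = (\rank A).+1.
Proof.
move=> Aw; rewrite -(addsmxE A w).
have := ltn_leqif (mxrank_leqif_sup (addsmxSl A w)).
have /negbTE-> : ~~ (A + w <= A)%MS.
  by apply: contra Aw; apply: submx_trans (addsmxSr A w).
have := (mxrank_adds_leqif A w).1; have := rank_leq_row w; lia.
Qed.

Section HermitianForm.

Variables (C : numClosedFieldType) (n l : nat).
Implicit Types u v w x y : 'rV[C]_n.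

Lemma hformDl u1 u2 v : hform l (u1 + u2) v = hform l u1 v + hform l u2 v.
Proof. by rewrite /hform -big_split; apply: eq_bigr => i _; rewrite !mxE /=; ring. Qed.

Lemma hformZl c u v : hform l (c *: u) v = c * hform l u v.
Proof. by rewrite /hform mulr_sumr; apply: eq_bigr => i _; rewrite !mxE /=; ring. Qed.

Lemma hformC u v : hform l v u = (hform l u v)^*.
Proof.
rewrite /hform rmorph_sum; apply: eq_bigr => i _.
by rewrite !rmorphM /= conjCK; case: ifP => _; rewrite ?rmorphN rmorph1; ring.
Qed.

Lemma hformDr u v1 v2 : hform l u (v1 + v2) = hform l u v1 + hform l u v2.
Proof. by rewrite hformC hformDl rmorphD /= -!hformC. Qed.

Lemma hformZr c u v : hform l u (c *: v) = c^* * hform l u v.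
Proof. by rewrite hformC hformZl rmorphM /= -hformC. Qed.

Lemma hform0l v : hform l 0 v = 0.
Proof. by rewrite -(scale0r 0) hformZl mul0r. Qed.

Lemma hform_real u : (hform l u u)^* = hform l u u.
Proof. by rewrite -hformC. Qed.

Lemma hformZZ c u : hform l (c *: u) (c *: u) = c * c^* * hform l u u.
Proof. by rewrite hformZl hformZr mulrA. Qed.

Lemma hform_mulmxl k (a : 'rV[C]_k) (A : 'M[C]_(k, n)) v :
  hform l (a *m A) v = \sum_i a 0 i * hform l (row i A) v.
Proof.
rewrite mulmx_sum_row.
rewrite (big_morph (fun u => hform l u v) (fun a b => hformDl a b v) (hform0l v)).
by apply: eq_bigr => i _; rewrite hformZl.
Qed.

Lemma hform_orthD c u v :
  hform l u v = 0 ->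
  hform l (u + c *: v) (u + c *: v) = hform l u u + c * c^* * hform l v v.
Proof.
move=> uv; rewrite hformDl !hformDr hformZZ hformZl hformZr (hformC u v) uv.
by rewrite conjC0 !mulr0 addr0 add0r.
Qed.

Definition hperp k u (F : 'M[C]_(k, n)) := forall j, hform l u (row j F) = 0.

Lemma hperp_submx k u (F : 'M[C]_(k, n)) x :
  hperp u F -> (x <= F)%MS -> hform l u x = 0.
Proof.
move=> uF /submxP [a ->]; rewrite hformC hform_mulmxl big1 ?conjC0 // => i _.
by rewrite hformC uF conjC0 mulr0.
Qed.

Lemma hperp0 k (F : 'M[C]_(k, n)) : hperp 0 F.
Proof. by move=> j; rewrite hform0l. Qed.

Lemma hperpD k u v (F : 'M[C]_(k, n)) : hperp u F -> hperp v F -> hperp (u + v) F.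
Proof. by move=> uF vF j; rewrite hformDl uF vF addr0. Qed.

Lemma hperpZ k c u (F : 'M[C]_(k, n)) : hperp u F -> hperp (c *: u) F.
Proof. by move=> uF j; rewrite hformZl uF mulr0. Qed.

Lemma isotropicP k (A : 'M[C]_(k, n)) :
  isotropic l A <-> forall i j, hform l (row i A) (row j A) = 0.
Proof.
split=> [isoA i j | rowsA u v /submxP [a ->] vA]; first by apply: isoA; apply: row_sub.
rewrite hform_mulmxl big1 // => i _.
by rewrite (@hperp_submx _ _ A) ?mulr0 // => j; apply: rowsA.
Qed.

Lemma isotropic_eqmx k1 k2 (A : 'M[C]_(k1, n)) (B : 'M[C]_(k2, n)) :
  (A :=: B)%MS -> isotropic l A -> isotropic l B.
Proof. by move=> eqAB isoA u v; rewrite -!eqAB; apply: isoA. Qed.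

Lemma isotropic_col_mx k (A : 'M[C]_(k, n)) w :
  isotropic l A -> hform l w w = 0 -> hperp w A -> isotropic l (col_mx A w).
Proof.
move=> /isotropicP isoA ww wA; apply/isotropicP => i j.
have row1 (j' : 'I_1) : row j' w = w by apply/rowP => x; rewrite mxE (ord1 j').
case: (split_ordP i) => i' ->; case: (split_ordP j) => j' ->;
  rewrite ?rowKu ?rowKd ?row1 //; first [exact: isoA | exact: wA | idtac].
by rewrite hformC wA conjC0.
Qed.

Lemma sum_mul_conjC_gt0 u : u != 0 -> 0 < \sum_i u 0 i * (u 0 i)^*.
Proof.
move=> u0; have [i ui0] : exists i, u 0 i != 0.
  apply/existsP; apply: contraR u0 => /existsPn ui0.
  by apply/eqP/rowP => i; rewrite mxE; apply/eqP/negPn.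
rewrite (bigD1 i) //= ltr_wpDr ?mul_conjC_gt0 //.
by apply: sumr_ge0 => j _; apply: mul_conjC_ge0.
Qed.

Lemma hform_sign_lt0 u :
  u != 0 -> (forall i : 'I_n, (l <= i)%N -> u 0 i = 0) -> hform l u u < 0.
Proof.
move=> u0 supp_u; rewrite -oppr_gt0 /hform -sumrN.
rewrite (eq_bigr (fun i => u 0 i * (u 0 i)^*)) ?sum_mul_conjC_gt0 // => i _.
case: ltnP => il /=; first by rewrite mulN1r mulNr opprK.
by rewrite supp_u // conjC0 !mulr0 oppr0.
Qed.

Lemma hform_sign_gt0 u :
  u != 0 -> (forall i : 'I_n, (i < l)%N -> u 0 i = 0) -> 0 < hform l u u.
Proof.
move=> u0 supp_u; rewrite /hform.
rewrite (eq_bigr (fun i => u 0 i * (u 0 i)^*)) ?sum_mul_conjC_gt0 // => i _.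
case: ltnP => il /=; last by rewrite mul1r.
by rewrite supp_u // conjC0 !mulr0.
Qed.

Definition hform_mx k (F : 'M[C]_(k, n)) : 'M[C]_(n, k) :=
  \matrix_(i, j) ((if (i < l)%N then -1 else 1) * (F j i)^*).

Lemma hform_mxE k u (F : 'M[C]_(k, n)) j : (u *m hform_mx F) 0 j = hform l u (row j F).
Proof. by rewrite !mxE /hform; apply: eq_bigr => i _; rewrite !mxE; ring. Qed.

Lemma pid_mx_supp u (i : 'I_n) : (u <= (pid_mx l : 'M_n))%MS -> (l <= i)%N -> u 0 i = 0.
Proof.
move=> /submxP [a ->] li; rewrite mxE big1 // => j _; rewrite mxE.
case: eqP => [eji|]; last by rewrite mulr0.
by rewrite -eji leqNgt in li; rewrite (negbTE li) mulr0.
Qed.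

Lemma copid_mx_supp u (i : 'I_n) : (u <= (copid_mx l : 'M_n))%MS -> (i < l)%N -> u 0 i = 0.
Proof.
move=> /submxP [a ->] il; rewrite mxE big1 // => j _; rewrite !mxE.
have [->|ne] := eqVneq j i; first by rewrite eqxx il subrr mulr0.
by rewrite (_ : (j == i :> nat) = false) ?subrr ?mulr0 //; apply: negbTE.
Qed.

Lemma exists_hperp_lt0 k (F : 'M[C]_(k, n)) :
  (k < l)%N -> (l <= n)%N -> exists2 a, hperp a F & hform l a a < 0.
Proof.
move=> kl ln.
have [|a [a0 aP aF]] :=
  @exists_kernel_vector_submx _ _ _ _ (pid_mx l : 'M_n) (hform_mx F).
  by rewrite rank_pid_mx.
exists a; first by move=> j; rewrite -hform_mxE aF mxE.
by apply: hform_sign_lt0 => // i; apply: pid_mx_supp.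
Qed.

Lemma exists_hperp_gt0 k (F : 'M[C]_(k, n)) :
  (k < n - l)%N -> (l <= n)%N -> exists2 b, hperp b F & 0 < hform l b b.
Proof.
move=> knl ln.
have [|b [b0 bP bF]] :=
  @exists_kernel_vector_submx _ _ _ _ (copid_mx l : 'M_n) (hform_mx F).
  by rewrite rank_copid_mx.
exists b; first by move=> j; rewrite -hform_mxE bF mxE.
by apply: hform_sign_gt0 => // i; apply: copid_mx_supp.
Qed.

Lemma hform_orth_isotropic_pair (a b : 'rV[C]_n) :
  hform l a b = 0 -> hform l a a * hform l b b < 0 ->
  exists c, hform l (a + c *: b) (a + c *: b) = 0 /\ hform l (a - c *: b) (a - c *: b) = 0.
Proof.
move=> ab; set ga := hform l a a; set gb := hform l b b => gab.
have gb0 : gb != 0 by apply: contraTneq gab => ->; rewrite mulr0 ltxx.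
have r_ge0 : 0 <= - ga / gb.
  have -> : - ga / gb = - (ga * gb) / (gb * gb^*).
    by rewrite hform_real -/gb; field.
  by rewrite divr_ge0 ?mul_conjC_ge0 // oppr_ge0 ltW.
set c := sqrtC (- ga / gb).
have cc : c * c^* = - ga / gb.
  by rewrite conj_Creal ?ger0_real ?sqrtC_ge0 // -expr2 sqrtCK.
exists c; rewrite -scaleNr !hform_orthD // rmorphN mulrNN cc -/ga -/gb.
by split; field.
Qed.

Section Witt.

Hypothesis hl2n : (l.*2 <= n)%N.

Let l_le_n : (l <= n)%N. Proof. by lia. Qed.

Lemma exists_hperp_opposite_sign k (F : 'M[C]_(k, n)) g :
  (k < l)%N -> g^* = g -> g != 0 -> exists2 y, hperp y F & hform l y y * g < 0.
Proof.
move=> kl gr g0.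
have /real_neqr_lt : g \is Num.real by rewrite CrealE gr.
move=> /(_ 0 (real0 C)); rewrite g0 => /esym /orP [gneg | gpos].
  have [|b bF bpos] := @exists_hperp_gt0 k F _ l_le_n; first by lia.
  by exists b; rewrite // nmulr_llt0.
have [a aF aneg] := exists_hperp_lt0 F kl l_le_n.
by exists a; rewrite // pmulr_llt0.
Qed.

Lemma hperp_split_isotropic k (F : 'M[C]_(k, n)) v :
  (k < l)%N -> hperp v F -> exists v1 v2,
    [/\ v = v1 + v2, hform l v1 v1 = 0, hform l v2 v2 = 0, hperp v1 F & hperp v2 F].
Proof.
move=> kl vF; set g := hform l v v.
have [g0 | g0] := eqVneq g 0.
  by exists v, 0; rewrite addr0 hform0l; split=> //; apply: hperp0.
have [y yF yg] := exists_hperp_opposite_sign F kl (hform_real v) g0.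
set t := hform l y v; set w := y + (- (t / g)) *: v.
have wF : hperp w F by apply: hperpD => //; apply: hperpZ.
have wv : hform l w v = 0 by rewrite hformDl hformZl -/t -/g; field.
have vw : hform l v w = 0 by rewrite hformC wv conjC0.
have ww : g * hform l w w < 0.
  rewrite mulrC {1}/w hformDl hformZl vw mulr0 addr0 /w hformDr hformZr -/t.
  rewrite rmorphN fmorph_div /= hform_real mulrDl.
  have -> : - (t^* / g) * t * g = - (t * t^*) by field.
  by rewrite subr_lt0 (lt_le_trans yg) ?mul_conjC_ge0.
have [c [vw_plus vw_minus]] := hform_orth_isotropic_pair vw ww.
exists (2^-1 *: (v + c *: w)), (2^-1 *: (v - c *: w)); split.
- rewrite -scalerDr addrACA subrr addr0 -mulr2n -scaler_nat scalerA.
  by rewrite mulVf ?pnatr_eq0 ?scale1r.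
- by rewrite hformZZ vw_plus mulr0.
- by rewrite hformZZ vw_minus mulr0.
- by apply: hperpZ; apply: hperpD => //; apply: hperpZ.
- by apply: hperpZ; apply: hperpD => //; rewrite -scaleNr; apply: hperpZ.
Qed.

Lemma exists_isotropic_hperp_notsub k (F : 'M[C]_(k, n)) :
  isotropic l F -> (k < l)%N ->
  exists w, [/\ hform l w w = 0, hperp w F & ~~ (w <= F)%MS].
Proof.
move=> isoF kl; have [a aF aneg] := exists_hperp_lt0 F kl l_le_n.
have [v1 [v2 [a_eq v1v1 v2v2 v1F v2F]]] := hperp_split_isotropic kl aF.
have [v1nF | v1sF] := boolP (v1 <= F)%MS; last by exists v1.
have [v2nF | v2sF] := boolP (v2 <= F)%MS; last by exists v2.
by move: aneg; rewrite a_eq isoF ?addmx_sub ?ltxx.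
Qed.

Lemma isotropic_extend d : forall k (F : 'M[C]_(k, n)),
  isotropic l F -> (\rank F + d = l)%N ->
  exists E : 'M[C]_n, [/\ isotropic l E, \rank E = l & (F <= E)%MS].
Proof.
elim: d => [|d IH] k F isoF rF.
  exists <<F>>%MS; rewrite mxrank_gen genmxE; split; last by [].
    exact: isotropic_eqmx (eqmx_sym (genmxE F)) isoF.
  by rewrite -rF addn0.
have isoG := isotropic_eqmx (eqmx_sym (eq_row_base F)) isoF.
have [|w [ww wG wnG]] := exists_isotropic_hperp_notsub isoG; first by lia.
rewrite eq_row_base in wnG.
have wF : hperp w F.
  by move=> j; apply: hperp_submx wG _; rewrite eq_row_base row_sub.
have [|E [isoE rE FwE]] := IH _ _ (isotropic_col_mx isoF ww wF).
  by rewrite mxrank_col_mx_notsub //; lia.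
by exists E; split=> //; apply: submx_trans FwE; rewrite -addsmxE addsmxSl.
Qed.

Lemma isotropic_extend_hperp k (Z : 'M[C]_(k, n)) w :
  isotropic l Z -> (k < l)%N -> hform l w w = 0 -> hperp w Z ->
  exists E : 'M[C]_n, [/\ isotropic l E, \rank E = l, (Z <= E)%MS & (w <= E)%MS].
Proof.
move=> isoZ kl ww wZ.
have [|E [isoE rE ZwE]] :=
    isotropic_extend (d := (l - \rank (col_mx Z w))%N) (isotropic_col_mx isoZ ww wZ).
  by have := rank_leq_row (col_mx Z w); lia.
by exists E; split=> //; apply: submx_trans ZwE; rewrite -addsmxE ?addsmxSl ?addsmxSr.
Qed.

End Witt.

Lemma CRtangent_hperp q (Z X : 'M[C]_(q, n)) :
  S_CRtangent l Z X -> forall i, hperp (row i X) Z.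
Proof.
move=> [tX tiX] i j; have e1 := tX i j; have e2 := tiX i j.
have rowZ (Y : 'M[C]_(q, n)) i' : row i' ('i *: Y) = 'i *: row i' Y.
  by apply/rowP => x; rewrite !mxE.
rewrite !rowZ hformZl hformZr conjCi in e2.
set A := hform l (row i X) (row j Z) in e1 e2 *.
set B := hform l (row i Z) (row j X) in e1 e2 *.
have : 'i * A *+ 2 = 'i * (A + B) + ('i * A + - 'i * B) by ring.
rewrite e1 e2 mulr0 addr0 => /eqP.
by rewrite mulrn_eq0 mulf_eq0 (negbTE (@neq0Ci C)) /= => /eqP.
Qed.

End HermitianForm.

Theorem lemma3p1 (C : numClosedFieldType) (q p l : nat)
  (hq0 : (0 < q)%N) (hqp : (q < p)%N) (hql : (q <= l)%N)
  (hl2 : (l.*2 <= p + q)%N) (hqlt : (q < l)%N)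
  (Z : 'M[C]_(q, p + q)) (hZfree : row_free Z) (hZ : isotropic l Z)
  (W : 'M[C]_(q * (p + q))) :
  (forall X : 'M[C]_(q, p + q), (X <= Z)%MS -> (mxvec X <= W)%MS) ->
  (forall X : 'M[C]_(q, p + q), (mxvec X <= W)%MS -> S_CRtangent l Z X) ->
  (forall E : 'M[C]_(p + q), isotropic l E -> \rank E = l -> (Z <= E)%MS ->
     forall X : 'M[C]_(q, p + q), Gr_tangent E X -> (mxvec X <= W)%MS) ->
  forall X : 'M[C]_(q, p + q), S_CRtangent l Z X -> (mxvec X <= W)%MS.
Proof.
move=> _ _ WGr X /CRtangent_hperp XZ.
have Wrow v i : hform l v v = 0 -> hperp l v Z -> (mxvec (delta_mx i 0 *m v) <= W)%MS.
  move=> vv vZ; have [E [isoE rE ZE vE]] := isotropic_extend_hperp hl2 hZ hqlt vv vZ.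
  by apply: (WGr E isoE rE ZE); apply: submx_trans (submxMl _ _) vE.
rewrite (sum_mx_delta_row X) linear_sum; apply: summx_sub => i _.
have [v1 [v2 [-> v1v1 v2v2 v1Z v2Z]]] := hperp_split_isotropic hl2 hqlt (XZ i).
by rewrite mulmxDr linearD addmx_sub ?Wrow.
Qed.
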